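(* Let $(G,Y)$ be a $C$-group. Every element $g\in G$ can be written as $g=g_1g_2^{-1}$ with $g_1,g_2$ positive elements; and for such a representation, $g\in[G,G]$ if and only if $\mathrm{ab}(g_1)=\mathrm{ab}(g_2)$. If moreover $(G,Y)$ is a finite $C$-group, then every $g\in G$ has such a representation with $g_2=\alpha_G(s_\Gamma^n)$ for some $n\ge0$ and $g_1=\alpha_G(s_1)$ for some $s_1\in S(G,Y)^G$.
   Context: A $C$-group is a pair $(G,Y)$ with $Y$ a conjugation-invariant subset of the group $G$ consisting of finitely many conjugacy classes, $1\notin Y$, such that $G$ has a presentation with generators the elements of $Y$ and defining relations all of the form $z^{-1}yz=y'$ ($y,y',z\in Y$); it is finite if $Y$ is finite. $\mathrm{ab}:G\to G/[G,G]$ is the abelianization map. The factorization semigroup $S(G,Y)$ is generated by symbols $x_y$, $y\in Y$, subject to $x_{g_1}x_{g_2}=x_{g_2}x_{g_2^{-1}g_1g_2}=x_{g_1g_2g_1^{-1}}x_{g_1}$; $\alpha_G:S(G,Y)\to G$, $x_y\mapsto y$. An element $g\in G$ is positive if $g=\alpha_G(s)$ for some $s\in S(G,Y)$. For $s=x_{g_1}\cdots x_{g_n}$, $G_s$ is the subgroup generated by the $g_j$, and $S(G,Y)^G=\{s:G_s=G\}$. For finite $(G,Y)$: $Y=C_1\sqcup\dots\sqcup C_m$ (conjugacy classes, $C_i=\{y_{i,1},\dots,y_{i,n_i}\}$), $p_i$ the least $p\ge1$ with $y^p$ central for $y\in C_i$, and $s_\Gamma=\prod_{i=1}^m\prod_{j=1}^{n_i}x_{y_{i,j}}^{p_i}$.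 *)

From mathcomp Require Import all_boot.
From Stdlib Require Import ClassicalEpsilon.

Set Implicit Arguments.
Unset Strict Implicit.
Unset Printing Implicit Defensive.

Local Open Scope group_scope.

Section CGroups.
Variable G : groupType.

Inductive gen (A : G -> Prop) : G -> Prop :=
  | gen_one : gen A 1
  | gen_base x : A x -> gen A x
  | gen_mul x y : gen A x -> gen A y -> gen A (x * y)
  | gen_inv x : gen A x -> gen A x^-1.

Definition is_hom (H : groupType) (phi : G -> H) : Prop :=
  forall a b : G, phi (a * b) = phi a * phi b.

Definition C_group (Y : G -> Prop) : Prop :=
  (forall y z : G, Y y -> Y (y ^ z)) /\
  (* Y consists of finitely many conjugacy classes *)
  (exists r : seq G, (forall y, y \in r -> Y y) /\
      forall y, Y y -> exists2 x, x \in r & exists z : G, y = x ^ z) /\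
  ~ Y 1 /\
  (* G is presented by generators Y and relations z^-1 y z = y' (y,y',z in Y):
     Y generates G and the canonical map <Y | relations> -> G is an
     isomorphism, i.e. G has the universal property of that presentation. *)
  (forall g : G, gen Y g) /\
  (forall (H : groupType) (f : G -> H),
      (forall y z : G, Y y -> Y z -> f (y ^ z) = f y ^ f z) ->
      exists phi : G -> H, is_hom phi /\ forall y, Y y -> phi y = f y).

(* Elements of the factorization semigroup S(G,Y) are represented by words
   x_{g_1} ... x_{g_n} (g_j in Y); all notions below are invariant under the
   defining relations of S(G,Y). *)
Definition word (Y : G -> Prop) (s : seq G) : Prop := forall y, y \in s -> Y y.

Definition alpha (s : seq G) : G := \prod_(y <- s) y.

Definition spow (s : seq G) (n : nat) : seq G := flatten (nseq n s).

Definition positive (Y : G -> Prop) (g : G) : Prop :=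
  exists s, word Y s /\ g = alpha s.

Definition G_s (s : seq G) : G -> Prop := gen (fun g => g \in s).

Definition in_SG (Y : G -> Prop) (s : seq G) : Prop :=
  word Y s /\ forall g : G, G_s s g.

Definition commutator_subgroup : G -> Prop :=
  gen (fun g => exists a b : G, g = [~ a, b]).

(* ab : G -> G/[G,G], g |-> the coset g[G,G] (as a subset of G) *)
Definition ab (g : G) : G -> Prop := fun h => commutator_subgroup (g^-1 * h).

Definition central (x : G) : Prop := forall z : G, x * z = z * x.

Definition cpow (y : G) : nat :=
  epsilon (inhabits 0%N)
    (fun p => (1 <= p)%N /\ central (y ^+ p) /\
       forall q, (1 <= q)%N -> central (y ^+ q) -> (p <= q)%N).

Definition s_Gamma (l : seq G) : seq G := flatten [seq nseq (cpow y) y | y <- l].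

End CGroups.

(* Quotients of positive elements form a subgroup containing Y, since
   a b^-1 c d^-1 = (a c^(b^-1)) (d b)^-1 and Y is conjugation invariant.  The
   criterion for [G,G] only uses that [G,G] is normal.  In the finite case,
   conjugation by y permutes the finite set Y, so some power of y centralises
   the generators; hence every p(y) exists and c := alpha(s_Gamma) is central.
   For y in Y, y^-1 c is positive (delete one letter y and conjugate the
   letters before it by y), so for every positive g2 some h := g2^-1 c^n is
   positive, and g = g1 g2^-1 = (g1 h c) c^-(n+1), where the word of g1 h c
   contains s_Gamma, hence every generator. *)

From mathcomp Require Import all_boot.
From mathcomp Require Import fingroup perm.
From Stdlib Require Import Classical ClassicalEpsilon FunctionalExtensionality
  PropExtensionality.
From Stdlib Require Wf_nat.

Set Implicit Arguments.
Unset Strict Implicit.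
Unset Printing Implicit Defensive.

Local Open Scope group_scope.

Section Alpha.
Variable G : groupType.
Implicit Types (s t : seq G) (y z : G).

Lemma alpha_nil : alpha (@nil G) = 1.
Proof. by rewrite /alpha big_nil. Qed.

Lemma alpha_cons y s : alpha (y :: s) = y * alpha s.
Proof. by rewrite /alpha big_cons. Qed.

Lemma alpha_cat s t : alpha (s ++ t) = alpha s * alpha t.
Proof. by rewrite /alpha big_cat. Qed.

Lemma alpha_nseq n y : alpha (nseq n y) = y ^+ n.
Proof. by rewrite /alpha big_nseq iter_mulg_1. Qed.

Lemma alpha_conj s z : alpha [seq x ^ z | x <- s] = alpha s ^ z.
Proof. by rewrite /alpha big_map conjg_prod. Qed.

Lemma alpha_spow s n : alpha (spow s n) = alpha s ^+ n.
Proof.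
elim: n => [|n IHn]; first by rewrite /spow /= alpha_nil.
by rewrite /spow /= alpha_cat -/(spow s n) IHn expgS.
Qed.

End Alpha.

Section Generation.
Variable G : groupType.
Implicit Types (A B : G -> Prop) (x g : G).

Lemma gen_mono A B g : (forall x, A x -> B x) -> gen A g -> gen B g.
Proof. by move=> sAB; elim=> [|x /sAB|x y _ Hx _ Hy|x _ Hx]; constructor. Qed.

Lemma gen_conj A g z :
  (forall x, A x -> A (x ^ z)) -> gen A g -> gen A (g ^ z).
Proof.
move=> Aconj; elim=> [|x /Aconj|x y _ Hx _ Hy|x _ Hx].
- by rewrite conj1g; apply: gen_one.
- exact: gen_base.
- by rewrite conjMg; apply: gen_mul.
- by rewrite conjVg; apply: gen_inv.
Qed.

Lemma central_gen A x :
  (forall g, gen A g) -> (forall y, A y -> commute x y) -> central x.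
Proof.
move=> genA cxA z; elim: (genA z) => [|u /cxA|u v _ ? _ ?|u _ ?] //.
- exact: commute1.
- exact: commuteM.
- exact: commuteV.
Qed.

Lemma centralM x y : central x -> central y -> central (x * y).
Proof. by move=> cx cy z; apply/commute_sym/commuteM; apply/commute_sym. Qed.

Lemma centralX x n : central x -> central (x ^+ n).
Proof. by move=> cx z; apply/commute_sym/commuteX/commute_sym. Qed.

End Generation.

Section CommutatorSubgroup.
Variable G : groupType.
Implicit Types g h : G.

Lemma commutator_subgroup_conj g z :
  commutator_subgroup g -> commutator_subgroup (g ^ z).
Proof.
by apply: gen_conj => _ [a [b ->]]; exists (a ^ z), (b ^ z); rewrite conjRg.
Qed.

Lemma commutator_subgroup_inv g :
  commutator_subgroup g -> commutator_subgroup g^-1.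
Proof. exact: gen_inv. Qed.

Lemma ab_eq_commutator_subgroup g1 g2 :
  commutator_subgroup (g1 * g2^-1) <-> ab g1 = ab g2.
Proof.
split=> [g12 | ab12].
  apply: functional_extensionality => h; apply: propositional_extensionality.
  rewrite /ab; split=> g1h.
  - have -> : g2^-1 * h = ((g1 * g2^-1) ^ g2) * (g1^-1 * h).
      by rewrite conjgE !mulgA mulgKV mulgK.
    exact/gen_mul/g1h/commutator_subgroup_conj.
  - have -> : g1^-1 * h = ((g1 * g2^-1)^-1 ^ g2) * (g2^-1 * h).
      by rewrite conjgE invMg invgK !mulgA mulgK mulVg mul1g.
    exact/gen_mul/g1h/commutator_subgroup_conj/commutator_subgroup_inv.
have : ab g2 g2 by rewrite /ab mulVg; apply: gen_one.
rewrite -ab12 /ab => g12.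
have -> : g1 * g2^-1 = (g1^-1 * g2)^-1 ^ g1^-1.
  by rewrite conjgE invMg !invgK !mulgA mulgK.
exact/commutator_subgroup_conj/commutator_subgroup_inv.
Qed.

End CommutatorSubgroup.

Section Positivity.
Variables (G : groupType) (Y : G -> Prop).
Hypothesis Yconj : forall y z : G, Y y -> Y (y ^ z).
Implicit Types (s t : seq G) (g : G).

Lemma word_cat s t : word Y s -> word Y t -> word Y (s ++ t).
Proof. by move=> Ys Yt y; rewrite mem_cat => /orP [/Ys|/Yt]. Qed.

Lemma word_conj s z : word Y s -> word Y [seq x ^ z | x <- s].
Proof. by move=> Ys _ /mapP [x /Ys Yx ->]; apply: Yconj. Qed.

Lemma gen_positive_quotient g :
  gen Y g -> exists s t, [/\ word Y s, word Y t & g = alpha s * (alpha t)^-1].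
Proof.
elim=> [|x Yx|x y _ [a [b [Ya Yb ->]]] _ [c [d [Yc Yd ->]]]|x _ [a [b [Ya Yb ->]]]].
- by exists [::], [::]; rewrite alpha_nil invg1 mulg1.
- exists [:: x], [::]; split=> //; last by rewrite alpha_cons alpha_nil invg1 !mulg1.
  by move=> y; rewrite inE => /eqP ->.
- exists (a ++ [seq u ^ alpha b | u <- c]), (d ++ b); split.
  + exact/word_cat/word_conj.
  + exact: word_cat.
  by rewrite !alpha_cat alpha_conj conjgE invMg !mulgA mulgK.
- by exists b, a; rewrite invMg invgK.
Qed.

Lemma inv_mul_alpha_word s y : y \in s -> word Y s ->
  exists2 t, word Y t & y^-1 * alpha s = alpha t.
Proof.
case/splitPr=> a b Yayb.
have Ya : word Y a by move=> x xa; apply: Yayb; rewrite mem_cat xa.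
have Yb : word Y b by move=> x xb; apply: Yayb; rewrite mem_cat inE xb !orbT.
exists ([seq x ^ y | x <- a] ++ b); first exact/word_cat/Yb/word_conj.
by rewrite alpha_cat alpha_cons alpha_cat alpha_conj conjgE !mulgA.
Qed.

Lemma inv_positive_mul_central_power c t :
  central c -> (forall y, Y y -> positive Y (y^-1 * c)) -> word Y t ->
  exists n, positive Y ((alpha t)^-1 * c ^+ n).
Proof.
move=> cc posYc; elim: t => [|y t IHt] Yyt.
  by exists 0; exists [::]; rewrite alpha_nil invg1 mulg1.
have [|n [h [Yh Eh]]] := IHt; first by move=> x xt; apply: Yyt; rewrite inE xt orbT.
have [h' [Yh' Eh']] := posYc y (Yyt y (mem_head _ _)).
exists n.+1, (h ++ h'); split; first exact: word_cat.
rewrite alpha_cons alpha_cat -Eh -Eh' expgS invMg -!mulgA; congr (_ * _).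
by rewrite (centralX n cc (y^-1 * c)) !mulgA.
Qed.

End Positivity.

Section LeastCentralPower.
Variable G : groupType.

Lemma conj_periodic (l : seq G) (y : G) :
  (forall x, x \in l -> x ^ y \in l) ->
  exists2 k, 0 < k & forall x, x \in l -> x ^ (y ^+ k) = x.
Proof.
move=> lconj.
have conj_in (x : seq_sub l) : ssval x ^ y \in l by case: x => x; apply: lconj.
pose sigma (x : seq_sub l) := SeqSub (conj_in x).
have sigma_inj : injective sigma.
  move=> [a al] [b bl] [] /conjg_inj eq_ab; move: al bl; rewrite eq_ab => al bl.
  by rewrite (bool_irrelevance al bl).
pose p := perm sigma_inj.
have iter_sigma n x : ssval (iter n sigma x) = ssval x ^ (y ^+ n).
  elim: n => [|n IHn]; first by rewrite conjg1.
  by rewrite iterS /= IHn -conjgM -expgSr.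
exists #[p]; first exact: order_gt0.
move=> x xl; rewrite -[x]/(ssval (SeqSub xl)) -iter_sigma.
have <- : iter #[p] p (SeqSub xl) = iter #[p] sigma (SeqSub xl).
  by apply: eq_iter => u; rewrite permE.
by rewrite -permX expg_order perm1.
Qed.

Lemma cpow_spec (y : G) : (exists2 k, 0 < k & central (y ^+ k)) ->
  0 < cpow y /\ central (y ^+ cpow y).
Proof.
move=> [k k_gt0 cyk].
pose P p := 0 < p /\ central (y ^+ p).
have [m [[Pm m_min] _]] : Wf_nat.has_unique_least_element le P.
  by apply: Wf_nat.dec_inh_nat_subset_has_unique_least_element;
    [move=> n; apply: classic | exists k].
have [|cpos [cc _]] := epsilon_spec (inhabits 0%N)
  (fun p => 0 < p /\ central (y ^+ p) /\
     forall q, 0 < q -> central (y ^+ q) -> p <= q); last by [].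
by case: Pm => m_gt0 cym; exists m; do 2!split=> //; move=> q q_gt0 cyq; apply/leP/m_min.
Qed.

End LeastCentralPower.

Section FiniteCGroup.
Variables (G : groupType) (Y : G -> Prop) (l : seq G).
Hypotheses (Yconj : forall y z : G, Y y -> Y (y ^ z)) (genY : forall g, gen Y g).
Hypothesis Yl : forall y, Y y <-> y \in l.

Lemma cpow_enum y : y \in l -> 0 < cpow y /\ central (y ^+ cpow y).
Proof.
move=> yl; apply: cpow_spec.
have [k k_gt0 fix_k] : exists2 k, 0 < k & forall x, x \in l -> x ^ (y ^+ k) = x.
  by apply: conj_periodic => x /Yl /(Yconj y) /Yl.
exists k => //; apply: (central_gen genY) => x /Yl /fix_k.
by move/conjg_fixP/commgP/commute_sym.
Qed.

Lemma mem_s_Gamma x : (x \in s_Gamma l) = (x \in l).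
Proof.
rewrite /s_Gamma; apply/flattenP/idP => [[_ /mapP [z zl ->]]|xl].
  by rewrite mem_nseq => /andP [_ /eqP ->].
by exists (nseq (cpow x) x); [apply: map_f|rewrite mem_nseq eqxx andbT; case: (cpow_enum xl)].
Qed.

Lemma word_s_Gamma : word Y (s_Gamma l).
Proof. by move=> x; rewrite mem_s_Gamma => /Yl. Qed.

Lemma central_alpha_s_Gamma : central (alpha (s_Gamma l)).
Proof.
rewrite /s_Gamma; elim: l (cpow_enum) => [|y m IHm] cpow_m.
  by rewrite alpha_nil => z; apply: commute_sym; apply: commute1.
rewrite /= alpha_cat alpha_nseq; apply: centralM.
  by case: (cpow_m y (mem_head _ _)).
by apply: IHm => z zm; apply: cpow_m; rewrite inE zm orbT.
Qed.

Lemma positive_inv_mul_alpha_s_Gamma y :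
  Y y -> positive Y (y^-1 * alpha (s_Gamma l)).
Proof.
move=> /Yl yl; have ys : y \in s_Gamma l by rewrite mem_s_Gamma.
by have [t Yt Et] := inv_mul_alpha_word Yconj ys word_s_Gamma; exists t.
Qed.

End FiniteCGroup.

Theorem lemma2p18 (G : groupType) (Y : G -> Prop) :
  C_group Y ->
  (forall g : G, exists g1 g2 : G,
      positive Y g1 /\ positive Y g2 /\ g = g1 * g2^-1) /\
  (forall g g1 g2 : G, positive Y g1 -> positive Y g2 -> g = g1 * g2^-1 ->
      (commutator_subgroup g <-> ab g1 = ab g2)) /\
  (* finite case: l is an enumeration (without repetition) of the finite Y *)
  (forall l : seq G, uniq l -> (forall y, Y y <-> y \in l) ->
     forall g : G, exists (n : nat) (s1 : seq G),
       in_SG Y s1 /\ g = alpha s1 * (alpha (spow (s_Gamma l) n))^-1).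
Proof.
move=> [Yconj [_ [_ [genY _]]]].
split.
  move=> g; have [s [t [Ys Yt ->]]] := gen_positive_quotient Yconj (genY g).
  by exists (alpha s), (alpha t); split; [exists s|split; [exists t|]].
split=> [g g1 g2 _ _ ->|l _ Yl g]; first exact: ab_eq_commutator_subgroup.
have [s [t [Ys Yt ->]]] := gen_positive_quotient Yconj (genY g).
have [n [h [Yh Eh]]] := inv_positive_mul_central_power
  (central_alpha_s_Gamma Yconj genY Yl) (positive_inv_mul_alpha_s_Gamma Yconj genY Yl) Yt.
exists n.+1, (s ++ h ++ s_Gamma l); split; first split.
- by apply: word_cat => //; apply: word_cat => //; apply: word_s_Gamma.
- move=> z; apply: gen_mono (genY z) => y /Yl yl.
  by rewrite !mem_cat (mem_s_Gamma Yconj genY Yl) yl !orbT.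
rewrite alpha_spow !alpha_cat -Eh expgSr invMg !mulgA.
by rewrite mulgK mulgK.
Qed.
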